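(* Let $p,q$ be positive integers, $m$ a non-negative integer and $s$ a positive integer. If there is an odd integer $a_1$ with $\frac12 G_{2^m s}=2a_1+1$, then $$\tfrac12 G_{2^{m+1}s}\equiv 1\pmod{2^{e_{g,0}}}\quad\text{and}\quad \tfrac12 G_{2^{m+1}s}\not\equiv 1\pmod{2^{e_{g,0}+1}},$$ where $e_{g,0}=3+\max\{x : 2^x\mid (a_1+1)\}$.
   Context: $A=pq+2$, $B=\sqrt{A^2-4}$, $G_n=\left(\frac{A+B}{2}\right)^n+\left(\frac{A-B}{2}\right)^n$ (an integer). *)

From Stdlib Require Import Reals ZArith Lra Lia.
Open Scope R_scope.

Definition Aval (p q : nat) : R := INR p * INR q + 2.
Definition Bval (p q : nat) : R := sqrt (Aval p q ^ 2 - 4).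

Definition G (p q : nat) (n : nat) : R :=
  ((Aval p q + Bval p q) / 2) ^ n + ((Aval p q - Bval p q) / 2) ^ n.

(* The roots (A+B)/2 and (A-B)/2 have product 1, so G_{2n} = G_n^2 - 2, i.e. with
   h_n = G_n/2 we get h_{2n} = 2 h_n^2 - 1.  Hence h_n = 2a+1 gives
   h_{2n} = 1 + 8a(a+1).  As a is odd, the 2-adic valuation of 8a(a+1) is
   exactly 3 + v_2(a+1). *)
From Stdlib Require Import Reals ZArith Lra Lia.
Open Scope R_scope.

Lemma pow_add_double_of_mul_1 (u v : R) (n : nat) :
  u * v = 1 -> u ^ (2 * n) + v ^ (2 * n) = (u ^ n + v ^ n) ^ 2 - 2.
Proof.
  intros Huv.
  assert (Hn : u ^ n * v ^ n = 1) by (rewrite <- Rpow_mult_distr, Huv; apply pow1).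
  replace (2 * n)%nat with (n + n)%nat by lia.
  rewrite !pow_add. nra.
Qed.

Lemma Aval_ge_2 (p q : nat) : 2 <= Aval p q.
Proof.
  unfold Aval. pose proof (pos_INR p). pose proof (pos_INR q). nra.
Qed.

Lemma G_roots_mul (p q : nat) :
  (Aval p q + Bval p q) / 2 * ((Aval p q - Bval p q) / 2) = 1.
Proof.
  pose proof (Aval_ge_2 p q) as HA.
  assert (HB : Bval p q * Bval p q = Aval p q ^ 2 - 4)
    by (apply sqrt_sqrt; nra).
  nra.
Qed.

Lemma G_double (p q n : nat) : G p q (2 * n) = G p q n ^ 2 - 2.
Proof. apply pow_add_double_of_mul_1, G_roots_mul. Qed.

Lemma half_G_double (p q n : nat) : G p q (2 * n) / 2 = 2 * (G p q n / 2) ^ 2 - 1.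
Proof. rewrite G_double. field. Qed.

Lemma odd_cofactor_of_max_pow2_dvd (z : Z) (x : nat) :
  (2 ^ Z.of_nat x | z)%Z ->
  (forall y : nat, (2 ^ Z.of_nat y | z)%Z -> (y <= x)%nat) ->
  exists c : Z, z = (2 ^ Z.of_nat x * c)%Z /\ Z.odd c = true.
Proof.
  intros [c Hc] Hmax. exists c. split; [lia |].
  destruct (Z.odd c) eqn:Ec; [reflexivity | exfalso].
  assert (Heven : Z.even c = true) by (rewrite <- Z.negb_odd, Ec; reflexivity).
  apply Z.even_spec in Heven as [d Hd].
  assert (Hdvd : (2 ^ Z.of_nat (S x) | z)%Z).
  { exists d. rewrite Hc, Hd, Nat2Z.inj_succ, Z.pow_succ_r by lia. ring. }
  apply Hmax in Hdvd. lia.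
Qed.

Lemma not_pow2_succ_dvd_mul_odd (e : nat) (c : Z) :
  Z.odd c = true -> ~ (2 ^ Z.of_nat (e + 1) | 2 ^ Z.of_nat e * c)%Z.
Proof.
  intros Hc [k Hk].
  rewrite Nat2Z.inj_add, Z.pow_add_r in Hk by lia.
  assert (Hpos : (0 < 2 ^ Z.of_nat e)%Z) by (apply Z.pow_pos_nonneg; lia).
  assert (Hc2 : c = (2 * k)%Z) by nia.
  rewrite Hc2, Z.odd_mul in Hc. discriminate.
Qed.

Lemma IZR_eq_1_add_mul_iff (N d : Z) :
  (exists k : Z, IZR N = 1 + IZR d * IZR k) <-> (d | N - 1)%Z.
Proof.
  split.
  - intros [k Hk]. exists k.
    rewrite <- mult_IZR, <- plus_IZR in Hk. apply eq_IZR in Hk. lia.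
  - intros [k Hk]. exists k.
    rewrite <- mult_IZR, <- plus_IZR. f_equal. lia.
Qed.

Theorem lemma5 (p q m s : nat) :
  (0 < p)%nat -> (0 < q)%nat -> (0 < s)%nat ->
  forall a1 : Z, Z.odd a1 = true ->
  G p q (2 ^ m * s) / 2 = 2 * IZR a1 + 1 ->
  forall x : nat,
    (* x = max { x : 2^x | a1 + 1 } *)
    (2 ^ Z.of_nat x | a1 + 1)%Z ->
    (forall y : nat, (2 ^ Z.of_nat y | a1 + 1)%Z -> (y <= x)%nat) ->
  let e := (3 + x)%nat in
  (exists k : Z, G p q (2 ^ (m + 1) * s) / 2 = 1 + IZR (2 ^ Z.of_nat e) * IZR k) /\
  ~ (exists k : Z, G p q (2 ^ (m + 1) * s) / 2 = 1 + IZR (2 ^ Z.of_nat (e + 1)) * IZR k).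
Proof.
  intros _ _ _ a1 Hodd Hhalf x Hdvd Hmax e.
  assert (Hnext : G p q (2 ^ (m + 1) * s) / 2 = IZR (1 + 8 * a1 * (a1 + 1))).
  { replace (2 ^ (m + 1) * s)%nat with (2 * (2 ^ m * s))%nat
      by (rewrite Nat.pow_add_r, Nat.pow_1_r; lia).
    rewrite half_G_double, Hhalf, plus_IZR, !mult_IZR, plus_IZR. simpl. ring. }
  destruct (odd_cofactor_of_max_pow2_dvd _ _ Hdvd Hmax) as [c [Hc Hcodd]].
  assert (Hval : (1 + 8 * a1 * (a1 + 1) - 1 = 2 ^ Z.of_nat e * (a1 * c))%Z).
  { unfold e. rewrite Nat2Z.inj_add, Z.pow_add_r, Hc by lia.
    change (2 ^ Z.of_nat 3)%Z with 8%Z. ring. }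
  rewrite Hnext, !IZR_eq_1_add_mul_iff, Hval.
  split.
  - apply Z.divide_factor_l.
  - apply not_pow2_succ_dvd_mul_odd. now rewrite Z.odd_mul, Hodd, Hcodd.
Qed.
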